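(* Let $p$ be a prime and $n$ a natural number. Let $(A,+,\circ)$ be a left brace of cardinality $p^{n}$ whose additive group is elementary abelian (an $\mathbb F_p$-brace), and let $a\in A$, $a\ne0$, be such that $a^{\circ p}=a\circ a\circ\cdots\circ a$ ($p$ factors) equals $0$. Then there are at least $p^{n/p}$ elements $b\in A$ such that $a*b=0$.
   Context: A (left) brace is a set $A$ with operations $+,\circ$ such that $(A,+)$ is an abelian group, $(A,\circ)$ is a group, and $a\circ(b+c)+a=a\circ b+a\circ c$; the identity of $(A,\circ)$ is $0$, and $a*b=a\circ b-a-b$. *)

From Stdlib Require Import Reals.
From HB Require Import structures.
From mathcomp Require Import all_boot all_order all_algebra.
Set Implicit Arguments. Unset Strict Implicit. Unset Printing Implicit Defensive.
Import GRing.Theory.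
Local Open Scope ring_scope.

Record is_left_brace (A : zmodType) (circ : A -> A -> A) : Prop := {
  brace_assoc : forall x y z, circ x (circ y z) = circ (circ x y) z;
  brace_id_l : forall x, circ 0 x = x;
  brace_id_r : forall x, circ x 0 = x;
  brace_inv : forall x, exists y, circ x y = 0 /\ circ y x = 0;
  brace_compat : forall x y z, circ x (y + z) + x = circ x y + circ x z
}.

Definition brace_star (A : zmodType) (circ : A -> A -> A) (a b : A) : A :=
  circ a b - a - b.

Definition circ_pow (A : zmodType) (circ : A -> A -> A) (a : A) (k : nat) : A :=
  iter k (circ a) 0.

Definition elementary_abelian (A : zmodType) (p : nat) : Prop :=
  forall x : A, x *+ p = 0.

Definition real_pow_le (p n k : nat) : Prop :=
  Rle (Rpower (INR p) (Rdiv (INR n) (INR p))) (INR k).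

(* The map x |-> a * x is lambda_a - 1, where lambda_a x = a o x - a is an
   additive map and a |-> lambda_a turns o into composition, so that
   lambda_a ^ p = lambda_(a^{o p}) = 1.  Since (A,+) has exponent p, the
   binomial theorem gives (lambda_a - 1) ^ p = lambda_a ^ p - 1 = 0.  For an
   additive map N, |ker N^(k+1)| <= |ker N| |ker N^k|, hence
   p^n = |ker N^p| <= |ker N|^p, which is the claim. *)

From Stdlib Require Import Reals.
From HB Require Import structures.
From mathcomp Require Import all_boot all_order all_algebra.
Set Implicit Arguments. Unset Strict Implicit. Unset Printing Implicit Defensive.

Section RealBound.
Local Open Scope R_scope.

Lemma INR_expn m k : INR (m ^ k) = INR m ^ k.
Proof. by elim: k => [|k IH]; rewrite ?expn0 // expnS -multE mult_INR IH. Qed.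

Lemma real_pow_le_expn p n k :
  (0 < p)%N -> (p ^ n <= k ^ p)%N -> real_pow_le p n k.
Proof.
move=> p_gt0 le_pn_kp.
have k_gt0 : (0 < k)%N.
  by move: le_pn_kp; case: k => //; rewrite exp0n // leqn0 expn_eq0; case: p p_gt0.
have [p_pos k_pos] : 0 < INR p /\ 0 < INR k by split; apply/lt_0_INR/ltP.
have Rpower_natK (x : R) : 0 < x -> Rpower (Rpower x (INR p)) (/ INR p) = x.
  by move=> x_gt0; rewrite Rpower_mult Rinv_r ?Rpower_1 //; apply: Rgt_not_eq.
rewrite /real_pow_le /Rdiv -(Rpower_natK (INR k)) //.
rewrite -!Rpower_mult !Rpower_pow //.
apply: Rle_Rpower_l; first exact/Rlt_le/Rinv_0_lt_compat.
split; first exact: pow_lt.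
by rewrite -!INR_expn; apply/le_INR/leP.
Qed.

End RealBound.

Import GRing.Theory.
Local Open Scope ring_scope.

Section AdditiveIteration.
Variables (V : zmodType) (f : {additive V -> V}).

Lemma iter_addrMn_binomial q x k :
  iter k (fun y => f y + y *+ q) x =
  \sum_(0 <= i < k.+1) iter i f x *+ ('C(k, i) * q ^ (k - i)).
Proof.
elim: k => [|k IH]; first by rewrite big_nat1 mul1n mulr1n.
rewrite iterS IH raddf_sum -sumrMnl [RHS]big_nat_recl //.
under [in RHS]eq_bigr do rewrite binS subSS mulnDl mulrnDr addrC.
rewrite big_split /= [RHS]addrCA; congr (_ + _).
  by apply: eq_bigr => i _; rewrite raddfMn.
rewrite [LHS]big_nat_recl // [in RHS]big_nat_recr //= !bin0 (bin_small (ltnSn k)).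
rewrite mul0n mulr0n addr0 !mul1n subn0 -mulrnA -expnSr; congr (_ + _).
by apply: eq_big_nat => i /andP[_ lt_ik]; rewrite -mulrnA -mulnA -expnSr subnSK.
Qed.

End AdditiveIteration.

Section KernelCount.
Variables (B : finZmodType) (f : {additive B -> B}).

Lemma card_le_ker_mul (S T : {set B}) :
  {in T, forall x, f x \in S} -> (#|T| <= #|[set x | f x == 0%R]| * #|S|)%N.
Proof.
move=> fTS.
pose pre y := odflt 0 [pick z | f z == y].
have preK x : f (pre (f x)) = f x.
  by rewrite /pre; case: pickP => [z /eqP // | /(_ x)]; rewrite eqxx.
pose split_ker x := (x - pre (f x), f x).
have split_ker_inj : {in T &, injective split_ker}.
  by move=> x y _ _ [eq_xy eq_fxy]; move: eq_xy; rewrite eq_fxy => /addIr.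
rewrite -cardsX -(card_in_imset split_ker_inj); apply/subset_leq_card/subsetP.
by move=> _ /imsetP[x Tx ->]; rewrite in_setX !inE raddfB preK subrr eqxx fTS.
Qed.

Lemma card_ker_iter k :
  (#|[set x | iter k f x == 0%R]| <= #|[set x | f x == 0%R]| ^ k)%N.
Proof.
elim: k => [|k IH].
  by rewrite expn0 (_ : [set x | _] = [set 0]) ?cards1 //; apply/setP => x; rewrite !inE.
apply: leq_trans (card_le_ker_mul (S := [set x | iter k f x == 0]) _) _.
  by move=> x; rewrite !inE iterSr.
by rewrite expnS leq_mul2l IH orbT.
Qed.

End KernelCount.

Section ElementaryAbelian.
Variables (V : zmodType) (p : nat).
Hypotheses (p_prime : prime p) (V_elem : elementary_abelian V p).

Lemma mulrn_predp (x : V) : x *+ p.-1 = - x.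
Proof. by apply/esym/addr0_eq; rewrite -mulrS prednK ?prime_gt0. Qed.

Lemma mulrn_predp_expn (x : V) j :
  x *+ (p.-1 ^ j) = if odd j then - x else x.
Proof.
elim: j => [|j IH]; first by rewrite expn0.
rewrite expnS mulnC mulrnA IH /=.
by case: (odd j); rewrite ?mulNrn mulrn_predp ?opprK.
Qed.

Lemma mulrn_predp_expp (x : V) : x *+ (p.-1 ^ p) = - x.
Proof.
rewrite mulrn_predp_expn; have [p2 | -> //] := even_prime p_prime.
by rewrite -mulrn_predp p2.
Qed.

End ElementaryAbelian.

Section Brace.
Variables (A : zmodType) (circ : A -> A -> A).
Hypothesis brace : is_left_brace circ.

Definition brace_lambda (a x : A) : A := circ a x - a.

Lemma brace_lambdaD a : {morph brace_lambda a : x y / x + y}.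
Proof.
by move=> x y; rewrite /brace_lambda addrACA -(brace_compat brace) -addrA addNKr.
Qed.

Lemma brace_lambda_is_zmod_morphism a : zmod_morphism (brace_lambda a).
Proof. by move=> x y; apply: (addIr (brace_lambda a y)); rewrite -brace_lambdaD !subrK. Qed.

Definition brace_lambda_additive a : {additive A -> A} :=
  HB.pack (brace_lambda a)
    (GRing.isZmodMorphism.Build _ _ _ (brace_lambda_is_zmod_morphism a)).

Lemma brace_lambdaM a b x :
  brace_lambda a (brace_lambda b x) = brace_lambda (circ a b) x.
Proof.
rewrite [LHS](brace_lambda_is_zmod_morphism a) /brace_lambda (brace_assoc brace).
by rewrite opprB addrA subrK.
Qed.

Lemma iter_brace_lambda a k x :
  iter k (brace_lambda a) x = brace_lambda (circ_pow circ a k) x.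
Proof.
elim: k => [|k IH] /=; first by rewrite /brace_lambda (brace_id_l brace) subr0.
by rewrite IH brace_lambdaM.
Qed.

Lemma brace_starE a x : brace_star circ a x = brace_lambda a x - x.
Proof. by []. Qed.

Lemma brace_star_is_zmod_morphism a : zmod_morphism (brace_star circ a).
Proof.
move=> x y; rewrite !brace_starE (brace_lambda_is_zmod_morphism a).
by rewrite !opprB addrACA [RHS]addrACA [- x + _]addrC.
Qed.

Definition brace_star_additive a : {additive A -> A} :=
  HB.pack (brace_star circ a)
    (GRing.isZmodMorphism.Build _ _ _ (brace_star_is_zmod_morphism a)).

Variable p : nat.
Hypotheses (p_prime : prime p) (A_elem : elementary_abelian A p).

Lemma iter_brace_star_prime a x :
  circ_pow circ a p = 0 -> iter p (brace_star circ a) x = 0.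
Proof.
move=> ap0.
(* -1 acts as p - 1, so a * _ = lambda_a + (p - 1) falls under the
   binomial expansion with natural coefficients. *)
have star_shift y : brace_star circ a y = brace_lambda_additive a y + y *+ p.-1.
  by rewrite brace_starE (mulrn_predp p_prime A_elem).
rewrite (eq_iter star_shift) iter_addrMn_binomial.
rewrite big_nat_recr //= (big_ltn (prime_gt0 p_prime)) big_nat_cond big1 /=.
  rewrite iter_brace_lambda ap0 /brace_lambda (brace_id_l brace) subr0.
  rewrite binn bin0 subnn subn0 muln1 mul1n mulr1n.
  by rewrite (mulrn_predp_expp p_prime A_elem) addr0 addNr.
move=> i /andP[i_bounds _].
have /dvdnP[m ->] := prime_dvd_bin p_prime i_bounds.
by rewrite mulnAC mulrnA A_elem.
Qed.

End Brace.

Theorem proposition3p5 (p n : nat) (A : finZmodType) (circ : A -> A -> A)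
  (a : A) :
  prime p ->
  #|A| = (p ^ n)%N ->
  elementary_abelian A p ->
  is_left_brace circ ->
  a != 0%R ->
  circ_pow circ a p = 0%R ->
  real_pow_le p n #|[set b : A | brace_star circ a b == 0%R]|.
Proof.
move=> p_prime card_A A_elem brace _ ap0.
apply: real_pow_le_expn (prime_gt0 p_prime) _.
have -> : (p ^ n)%N = #|[set x | iter p (brace_star_additive brace a) x == 0]|.
  rewrite -card_A; apply: eq_card => x.
  by rewrite !inE (iter_brace_star_prime brace p_prime A_elem x ap0) eqxx.
exact: card_ker_iter.
Qed.
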